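(* Let $G$ be a simplicial group and $M$ an abelian $\pi_0(G)$-module. Define $\eta_1:G_1\to (N_1G/B_1NG)\times G_0$ by $\eta_1(g_1)=\big(g_1\,(s_0d_1g_1)^{-1}B_1NG,\ d_1g_1\big)$. Then $z'\mapsto \big((g_1,g_0)\mapsto z'(\eta_1(g_1),g_0)\big)$ defines an isomorphism $Z^2(T^1G,M)\to Z^2(G,M)$ which restricts to an isomorphism $B^2(T^1G,M)\to B^2(G,M)$. In particular $H^2(G,M)\cong H^2(T^1G,M)$.
   Context: Simplicial group $G$: groups $G_n$, faces $d_k$, degeneracies $s_k$. Moore complex $N_0G=G_0$, $N_nG=\bigcap_{k=1}^n\ker d_k$, differential $d_0$; $B_nNG=d_0(N_{n+1}G)$; $\pi_0(G)=G_0/B_0NG$. Cochains of $G$: $C^n(G,M)=\mathrm{Map}(G_{n-1}\times\cdots\times G_0,M)$, $(dc)(g_n,\dots,g_0)=c(d_0g_n,\dots,d_0g_1)+\sum_{k=1}^n(-1)^kc(d_kg_n,\dots,d_kg_{k+1},(d_kg_k)g_{k-1},g_{k-2},\dots,g_0)+(-1)^{n+1}\langle g_n\rangle\cdot c(g_{n-1},\dots,g_0)$, where $\langle g\rangle\in\pi_0(G)$ is the class of $d_1\cdots d_n(g)$. The crossed module $T^1G$: group part $G_0$, module part $N_1G/B_1NG$, structure map $xB_1NG\mapsto d_0x$, action ${}^g(xB_1NG)=s_0(g)xs_0(g)^{-1}B_1NG$; $\pi_0(T^1G)=\pi_0(G)$. For a crossed module $V=(G_V,M_V,\mu)$ with $\bar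 g$ the class of $g$ in $\pi_0(V)=G_V/\mu(M_V)$: $C^1(V,M)=\mathrm{Map}(G_V,M)$, $C^2(V,M)=\mathrm{Map}(M_V\times G_V\times G_V,M)$, $C^3(V,M)=\mathrm{Map}(M_V\times M_V\times G_V\times M_V\times G_V\times G_V,M)$, $(dc)(m,h,g)=c(\mu(m)h)-c(hg)+\bar h\cdot c(g)$, $(dc)(p,n,k,m,h,g)=c(p,\mu(n)k,\mu(m)h)-c(pn,k,hg)+c(n\,{}^km,kh,g)-\bar k\cdot c(m,h,g)$. *)

(* (M is a zmodType); groups G_n are possibly infinite, so
   they are given by an explicit record of carrier + operations + axioms. *)
From HB Require Import structures.
From mathcomp Require Import all_boot all_algebra.
Set Implicit Arguments. Unset Strict Implicit. Unset Printing Implicit Defensive.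
Import GRing.Theory.
Local Open Scope ring_scope.

Record grp := Grp {
  gcar :> Type;
  gmul : gcar -> gcar -> gcar;
  gone : gcar;
  ginv : gcar -> gcar;
  gmulA : forall x y z, gmul x (gmul y z) = gmul (gmul x y) z;
  gmul1l : forall x, gmul gone x = x;
  gmul1r : forall x, gmul x gone = x;
  gmulVl : forall x, gmul (ginv x) x = gone;
  gmulVr : forall x, gmul x (ginv x) = gone }.

Arguments gmul {g}. Arguments gone {g}. Arguments ginv {g}.

Definition is_ghom (A B : grp) (f : A -> B) : Prop :=
  (forall x y, f (gmul x y) = gmul (f x) (f y)) /\ f gone = gone /\
  (forall x, f (ginv x) = ginv (f x)).

Unset Implicit Arguments.
Record sgrp := SGrp {
  sG : nat -> grp;
  face : forall n, nat -> sG n.+1 -> sG n;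
  degen : forall n, nat -> sG n -> sG n.+1;
  face_hom : forall n i, is_ghom (face n i);
  degen_hom : forall n j, is_ghom (degen n j);
  face_face : forall n i j (x : sG n.+2), (i < j)%N -> (j <= n.+2)%N ->
      face n i (face n.+1 j x) = face n j.-1 (face n.+1 i x);
  degen_degen : forall n i j (x : sG n), (i <= j)%N -> (j <= n)%N ->
      degen n.+1 i (degen n j x) = degen n.+1 j.+1 (degen n i x);
  face_degen_lt : forall n i j (x : sG n.+1), (i < j)%N -> (j <= n.+1)%N ->
      face n.+1 i (degen n.+1 j x) = degen n j.-1 (face n i x);
  face_degen_eq : forall n j (x : sG n), (j <= n)%N -> face n j (degen n j x) = x;
  face_degen_eq1 : forall n j (x : sG n), (j <= n)%N -> face n j.+1 (degen n j x) = x;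
  face_degen_gt : forall n i j (x : sG n.+1), (j.+1 < i)%N -> (i <= n.+2)%N ->
      face n.+1 i (degen n.+1 j x) = degen n j (face n i.-1 x) }.
Set Implicit Arguments.

Section SG.
Variable G : sgrp.
Local Notation G0 := (sG G 0).
Local Notation G1 := (sG G 1).
Local Notation G2 := (sG G 2).

Definition d0_1 : G1 -> G0 := face G 0 0.
Definition d1_1 : G1 -> G0 := face G 0 1.
Definition d0_2 : G2 -> G1 := face G 1 0.
Definition d1_2 : G2 -> G1 := face G 1 1.
Definition d2_2 : G2 -> G1 := face G 1 2.
Definition s0_0 : G0 -> G1 := degen G 0 0.

Definition N1 (x : G1) : Prop := d1_1 x = gone.
Definition N2 (y : G2) : Prop := d1_2 y = gone /\ d2_2 y = gone.
Definition B1 (x : G1) : Prop := exists y, N2 y /\ d0_2 y = x.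
Definition B0 (g : G0) : Prop := exists x, N1 x /\ d0_1 x = g.

Definition N1t := {x : G1 | N1 x}.

Lemma N1_mul_proof (x y : N1t) : N1 (gmul (sval x) (sval y)).
Proof.
case: x => x Hx; case: y => y Hy /=; rewrite /N1 /d1_1.
have [Hm _] := face_hom G 0 1. by rewrite Hm -/(d1_1 x) -/(d1_1 y) Hx Hy gmul1l.
Qed.
Definition N1mul (x y : N1t) : N1t := exist _ _ (N1_mul_proof x y).

Lemma N1_conj_proof (k : G0) (m : N1t) :
  N1 (gmul (gmul (s0_0 k) (sval m)) (ginv (s0_0 k))).
Proof.
case: m => m Hm /=; rewrite /N1 /d1_1.
have [Hmul [_ Hinv]] := face_hom G 0 1.
rewrite !Hmul Hinv -/(d1_1 m) Hm gmul1r /s0_0.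
by rewrite (face_degen_eq1 G 0 0 k (leqnn 0)) gmulVr.
Qed.
Definition N1conj (k : G0) (m : N1t) : N1t := exist _ _ (N1_conj_proof k m).

(* eta_1 (first component, as a representative in N_1G) *)
Lemma eta1_proof (g : G1) : N1 (gmul g (ginv (s0_0 (d1_1 g)))).
Proof.
rewrite /N1 /d1_1. have [Hmul [_ Hinv]] := face_hom G 0 1.
by rewrite Hmul Hinv /s0_0 (face_degen_eq1 G 0 0 _ (leqnn 0)) gmulVr.
Qed.
Definition eta1 (g : G1) : N1t := exist _ _ (eta1_proof g).

(* An abelian pi_0(G)-module: an action of G_0 on M by additive maps that is
   trivial on B_0NG, i.e. factors through pi_0(G) = G_0 / B_0NG. *)
Definition is_pi0_module (M : zmodType) (act : G0 -> M -> M) : Prop :=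
  (forall m, act gone m = m) /\
  (forall g h m, act (gmul g h) m = act g (act h m)) /\
  (forall g m1 m2, act g (m1 + m2) = act g m1 + act g m2) /\
  (forall b m, B0 b -> act b m = m).

Variables (M : zmodType) (act : G0 -> M -> M).

(* C^1 = Map(G_0, M), C^2 = Map(G_1 x G_0, M), C^3 = Map(G_2 x G_1 x G_0, M)
   (curried); <g> for g in G_n acts through d_1...d_n g. *)
Definition dG1 (b : G0 -> M) : G1 -> G0 -> M := fun g1 g0 =>
  b (d0_1 g1) - b (gmul (d1_1 g1) g0) + act (d1_1 g1) (b g0).
Definition dG2 (c : G1 -> G0 -> M) : G2 -> G1 -> G0 -> M := fun g2 g1 g0 =>
  c (d0_2 g2) (d0_1 g1) - c (d1_2 g2) (gmul (d1_1 g1) g0)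
  + c (gmul (d2_2 g2) g1) g0 - act (d1_1 (d2_2 g2)) (c g1 g0).
Definition Z2G (c : G1 -> G0 -> M) : Prop := forall g2 g1 g0, dG2 c g2 g1 g0 = 0.
Definition B2G (c : G1 -> G0 -> M) : Prop :=
  exists b : G0 -> M, forall g1 g0, c g1 g0 = dG1 b g1 g0.

(* Module part N_1G/B_1NG: a map on (N_1G/B_1NG) x G_0 x G_0 is represented
   as a map on N_1G x G_0 x G_0 constant on B_1NG-cosets in the first slot. *)
Definition coset_inv2 (c : N1t -> G0 -> G0 -> M) : Prop :=
  forall m m' : N1t, B1 (gmul (ginv (sval m)) (sval m')) ->
    forall h g, c m h g = c m' h g.
(* structure map mu(x B_1NG) = d_0 x; action bar k . acts as k *)
Definition dT1 (b : G0 -> M) : N1t -> G0 -> G0 -> M := fun m h g =>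
  b (gmul (d0_1 (sval m)) h) - b (gmul h g) + act h (b g).
Definition dT2 (c : N1t -> G0 -> G0 -> M) :
    N1t -> N1t -> G0 -> N1t -> G0 -> G0 -> M := fun p n k m h g =>
  c p (gmul (d0_1 (sval n)) k) (gmul (d0_1 (sval m)) h)
  - c (N1mul p n) k (gmul h g)
  + c (N1mul n (N1conj k m)) (gmul k h) g
  - act k (c m h g).
Definition Z2T (c : N1t -> G0 -> G0 -> M) : Prop :=
  coset_inv2 c /\ forall p n k m h g, dT2 c p n k m h g = 0.
Definition B2T (c : N1t -> G0 -> G0 -> M) : Prop :=
  coset_inv2 c /\ exists b : G0 -> M, forall m h g, c m h g = dT1 b m h g.

Definition Phi (z : N1t -> G0 -> G0 -> M) : G1 -> G0 -> M :=
  fun g1 g0 => z (eta1 g1) (d1_1 g1) g0.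

End SG.

(* Every g1 in G_1 factors as g1 = eta1(g1) s_0(d_1 g1) with eta1(g1) in N_1G, and every
   pair (m, h) in N_1G x G_0 arises this way from m s_0(h); so Phi is a bijection of
   cochains, with inverse c |-> ((m, h, g) |-> c(m s_0 h, g)).  Comparing the two cocycle
   conditions, the T^1G condition at (p, n, k, m, h, g) is the G condition at the
   2-simplex s_0(p) s_1(n s_0 k) and the 1-simplex m s_0(h); conversely the G condition
   at g2 becomes the T^1G one because eta1 is multiplicative on the faces of g2 up to
   B_1NG, which a 2-cocycle of T^1G cannot see.  Coboundaries correspond since
   Phi (dT1 b) = dG1 b. *)
From HB Require Import structures.
From mathcomp Require Import all_boot all_algebra.
From Stdlib Require Import ProofIrrelevance.
Import GRing.Theory.
Local Open Scope ring_scope.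
Set Implicit Arguments. Unset Strict Implicit.

Section GroupTheory.
Variable A : grp.
Implicit Types x y : A.

Lemma gmulK x y : gmul (gmul x y) (ginv y) = x.
Proof. by rewrite -gmulA gmulVr gmul1r. Qed.

Lemma gmulKV x y : gmul (gmul x (ginv y)) y = x.
Proof. by rewrite -gmulA gmulVl gmul1r. Qed.

Lemma ginv_uniq x y : gmul x y = gone -> ginv x = y.
Proof. by move=> xy1; rewrite -[RHS]gmul1l -(gmulVl x) -gmulA xy1 gmul1r. Qed.

Lemma ginvM x y : ginv (gmul x y) = gmul (ginv y) (ginv x).
Proof. by apply: ginv_uniq; rewrite -gmulA [gmul y _]gmulA gmulVr gmul1l gmulVr. Qed.

Lemma ginvK x : ginv (ginv x) = x.
Proof. by apply: ginv_uniq; rewrite gmulVl. Qed.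

Lemma ginv1 : ginv (@gone A) = gone.
Proof. by apply: ginv_uniq; rewrite gmul1l. Qed.

End GroupTheory.

Section SimplicialIdentities.
Variable G : sgrp.

Lemma faceM n i x y : face G n i (gmul x y) = gmul (face G n i x) (face G n i y).
Proof. by case: (face_hom G n i). Qed.

Lemma face1 n i : face G n i gone = gone.
Proof. by case: (face_hom G n i) => _ []. Qed.

Lemma faceV n i x : face G n i (ginv x) = ginv (face G n i x).
Proof. by case: (face_hom G n i) => _ []. Qed.

Lemma degenM n i x y : degen G n i (gmul x y) = gmul (degen G n i x) (degen G n i y).
Proof. by case: (degen_hom G n i). Qed.

Lemma degen1 n i : degen G n i gone = gone.
Proof. by case: (degen_hom G n i) => _ []. Qed.

Lemma degenV n i x : degen G n i (ginv x) = ginv (degen G n i x).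
Proof. by case: (degen_hom G n i) => _ []. Qed.

Lemma d0s0_0 x : face G 0 0 (degen G 0 0 x) = x.
Proof. exact: face_degen_eq. Qed.
Lemma d1s0_0 x : face G 0 1 (degen G 0 0 x) = x.
Proof. exact: face_degen_eq1. Qed.
Lemma d0s0_1 x : face G 1 0 (degen G 1 0 x) = x.
Proof. exact: face_degen_eq. Qed.
Lemma d1s0_1 x : face G 1 1 (degen G 1 0 x) = x.
Proof. exact: face_degen_eq1. Qed.
Lemma d2s0_1 x : face G 1 2 (degen G 1 0 x) = degen G 0 0 (face G 0 1 x).
Proof. exact: (face_degen_gt G 0 2 0). Qed.
Lemma d0s1_1 x : face G 1 0 (degen G 1 1 x) = degen G 0 0 (face G 0 0 x).
Proof. exact: (face_degen_lt G 0 0 1). Qed.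
Lemma d1s1_1 x : face G 1 1 (degen G 1 1 x) = x.
Proof. exact: face_degen_eq. Qed.
Lemma d2s1_1 x : face G 1 2 (degen G 1 1 x) = x.
Proof. exact: face_degen_eq1. Qed.
Lemma d1d2 x : face G 0 1 (face G 1 2 x) = face G 0 1 (face G 1 1 x).
Proof. exact: (face_face G 0 1 2). Qed.
Lemma d0d2 x : face G 0 0 (face G 1 2 x) = face G 0 1 (face G 1 0 x).
Proof. exact: (face_face G 0 0 2). Qed.
Lemma d0d1 x : face G 0 0 (face G 1 1 x) = face G 0 0 (face G 1 0 x).
Proof. exact: (face_face G 0 0 1). Qed.

End SimplicialIdentities.

Ltac sgrp_simpl := repeat progress rewrite
  ?faceM ?faceV ?face1 ?degenM ?degenV ?degen1 ?ginvM ?ginvK ?ginv1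
  ?d0s0_0 ?d1s0_0 ?d0s0_1 ?d1s0_1 ?d2s0_1 ?d0s1_1 ?d1s1_1 ?d2s1_1 ?d1d2
  ?gmulA ?gmulVl ?gmulVr ?gmul1l ?gmul1r ?gmulK ?gmulKV.

Section MooreComplex.
Variable G : sgrp.

Lemma N1t_eq (m m' : N1t G) : sval m = sval m' -> m = m'.
Proof.
case: m m' => [m Hm] [m' Hm'] /= eq_mm'; subst m'.
by rewrite (proof_irrelevance _ Hm Hm').
Qed.

Lemma B1V (a : sG G 1) : B1 a -> B1 (ginv a).
Proof.
move=> [y [[y1 y2] <-]]; exists (ginv y).
by move: y1 y2; rewrite /N2 /d1_2 /d2_2 /d0_2 !faceV => -> ->; rewrite ginv1.
Qed.

Lemma B1_conj (w a : sG G 1) : B1 a -> B1 (gmul (gmul w a) (ginv w)).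
Proof.
move=> [y [[y1 y2] <-]]; exists (gmul (gmul (degen G 1 0 w) y) (ginv (degen G 1 0 w))).
move: y1 y2; rewrite /N2 /d1_2 /d2_2 /d0_2 => y1 y2.
rewrite !faceM !faceV y1 y2 d0s0_1 d1s0_1 d2s0_1 !gmul1r.
by do !split; rewrite gmulVr.
Qed.

Lemma B1_d0 (b : sG G 1) : B1 b -> face G 0 0 b = gone.
Proof. by move=> [y [[y1 _] <-]]; move: y1; rewrite /d0_2 /d1_2 -d0d1 => ->; rewrite face1. Qed.

Lemma d0_eta1 (g : sG G 1) :
  gmul (face G 0 0 (sval (eta1 g))) (face G 0 1 g) = face G 0 0 g.
Proof. by rewrite /= /s0_0 /d1_1; sgrp_simpl. Qed.

Lemma eta1_s0 (m : N1t G) (h : sG G 0) : eta1 (gmul (sval m) (degen G 0 0 h)) = m.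
Proof.
apply: N1t_eq; case: m => m /=; rewrite /N1 /s0_0 /d1_1 => m1.
by sgrp_simpl; rewrite m1; sgrp_simpl.
Qed.

Lemma d1_s0 (m : N1t G) (h : sG G 0) : face G 0 1 (gmul (sval m) (degen G 0 0 h)) = h.
Proof. by case: m => m /=; rewrite /N1 /d1_1 => m1; sgrp_simpl; rewrite m1 gmul1l. Qed.

Lemma eta1M_conj (x y : sG G 1) :
  eta1 (gmul x y) = N1mul (eta1 x) (N1conj (d1_1 x) (eta1 y)).
Proof. by apply: N1t_eq; rewrite /= /s0_0 /d1_1; sgrp_simpl. Qed.

(* Killing the degenerate parts of g2 leaves v in N_2G; the defect of eta1 on the faces
   of g2 is a conjugate of (d_0 v)^-1. *)
Lemma eta1_faces_B1 (g2 : sG G 2) :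
  B1 (gmul (ginv (sval (N1mul (eta1 (d0_2 g2)) (eta1 (d2_2 g2)))))
           (sval (eta1 (d1_2 g2)))).
Proof.
set u := gmul g2 (ginv (degen G 1 1 (face G 1 2 g2))).
set v := gmul u (ginv (degen G 1 0 (face G 1 1 u))).
have d0v_B1 : B1 (face G 1 0 v).
  by exists v; split => //; rewrite /N2 /d1_2 /d2_2 /v /u; sgrp_simpl.
set k := face G 0 1 (face G 1 2 g2).
set X := gmul (gmul (face G 1 0 g2)
  (ginv (degen G 0 0 (face G 0 0 (face G 1 2 g2))))) (face G 1 2 g2).
have -> : gmul (ginv (sval (N1mul (eta1 (d0_2 g2)) (eta1 (d2_2 g2)))))
               (sval (eta1 (d1_2 g2)))
    = gmul (gmul (gmul (degen G 0 0 k) (ginv X)) (ginv (face G 1 0 v)))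
           (ginv (gmul (degen G 0 0 k) (ginv X))).
  by rewrite /= /d0_2 /d1_2 /d2_2 /s0_0 /d1_1 /v /u /X /k; sgrp_simpl; rewrite d0d2; sgrp_simpl.
exact/B1_conj/B1V.
Qed.

End MooreComplex.

Section CochainComparison.
Variables (G : sgrp) (M : zmodType) (act : sG G 0 -> M -> M).
Implicit Types (z : N1t G -> sG G 0 -> sG G 0 -> M) (c : sG G 1 -> sG G 0 -> M).

Definition Phi_lift c : N1t G -> sG G 0 -> sG G 0 -> M :=
  fun m h g => c (gmul (sval m) (s0_0 h)) g.

Lemma Phi_s0 z m h g : Phi z (gmul (sval m) (s0_0 h)) g = z m h g.
Proof. by rewrite /Phi /d1_1 eta1_s0 d1_s0. Qed.

Lemma Phi_liftK c g1 g0 : Phi (Phi_lift c) g1 g0 = c g1 g0.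
Proof. by rewrite /Phi /Phi_lift /= /s0_0 /d1_1; sgrp_simpl. Qed.

Lemma Phi_dT1 (b : sG G 0 -> M) g1 g0 : Phi (dT1 act b) g1 g0 = dG1 act b g1 g0.
Proof. by rewrite /Phi /dT1 /dG1 /d0_1 /d1_1 d0_eta1. Qed.

Lemma dT1_B2T (b : sG G 0 -> M) : B2T act (dT1 act b).
Proof.
split; last by exists b.
move=> m m' mm'_B1 h g; rewrite /dT1.
have -> : sval m' = gmul (sval m) (gmul (ginv (sval m)) (sval m')) by sgrp_simpl.
by rewrite /d0_1 faceM (B1_d0 mm'_B1) gmul1r.
Qed.

Lemma Phi_Z2 z : Z2T act z -> Z2G act (Phi z).
Proof.
move=> [z_coset z_cocycle] g2 g1 g0.
have e_d0 : d1_1 (d0_2 g2) = gmul (d0_1 (sval (eta1 (d2_2 g2)))) (d1_1 (d2_2 g2)).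
  by rewrite /d1_1 /d0_1 d0_eta1 /d0_2 /d2_2 d0d2.
have e_g1 : d0_1 g1 = gmul (d0_1 (sval (eta1 g1))) (d1_1 g1).
  by rewrite /d0_1 /d1_1 d0_eta1.
have e_d1 : z (eta1 (d1_2 g2)) (d1_1 (d1_2 g2)) (gmul (d1_1 g1) g0)
    = z (N1mul (eta1 (d0_2 g2)) (eta1 (d2_2 g2))) (d1_1 (d2_2 g2)) (gmul (d1_1 g1) g0).
  by rewrite -(z_coset _ _ (eta1_faces_B1 g2)) /d1_1 /d1_2 /d2_2 d1d2.
have e_d1M : d1_1 (gmul (d2_2 g2) g1) = gmul (d1_1 (d2_2 g2)) (d1_1 g1).
  by rewrite /d1_1 faceM.
have := z_cocycle (eta1 (d0_2 g2)) (eta1 (d2_2 g2)) (d1_1 (d2_2 g2)) (eta1 g1) (d1_1 g1) g0.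
by rewrite /dT2 /dG2 /Phi e_d0 e_g1 e_d1 eta1M_conj e_d1M.
Qed.

(* The cocycle condition at the 2-simplices y s_0(w) and s_0(w), y in N_2G. *)
Lemma Z2G_B1_invariant c (b w : sG G 1) (g : sG G 0) :
  Z2G act c -> B1 b -> c (gmul b w) g = c w g.
Proof.
move=> c_cocycle [y [[y1 y2] <-]]; move: y1 y2; rewrite /d1_2 /d2_2 /d0_2 => y1 y2.
have := c_cocycle (gmul y (degen G 1 0 w)) (degen G 0 0 g) gone.
have := c_cocycle (degen G 1 0 w) (degen G 0 0 g) gone.
rewrite /dG2 /d0_2 /d1_2 /d2_2 /d0_1 /d1_1; sgrp_simpl; rewrite ?y1 ?y2; sgrp_simpl.
rewrite subrr add0r => degenerate_eq0; rewrite -addrA degenerate_eq0 addr0 => /eqP.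
by rewrite subr_eq0 => /eqP.
Qed.

Lemma Phi_lift_Z2 c : Z2G act c -> Z2T act (Phi_lift c).
Proof.
move=> c_cocycle; split.
  move=> m m' mm'_B1 h g; rewrite /Phi_lift.
  have -> : gmul (sval m') (s0_0 h) =
      gmul (gmul (gmul (sval m) (gmul (ginv (sval m)) (sval m'))) (ginv (sval m)))
           (gmul (sval m) (s0_0 h)) by sgrp_simpl.
  by rewrite [RHS]Z2G_B1_invariant //; apply: B1_conj.
move=> [p p1] [n n1] k [m m1] h g; move: p1 n1 m1; rewrite /N1 /d1_1 => p1 n1 m1.
have := c_cocycle (gmul (degen G 1 0 p) (degen G 1 1 (gmul n (degen G 0 0 k))))
                  (gmul m (degen G 0 0 h)) g.
rewrite /dT2 /dG2 /Phi_lift /= /d0_2 /d1_2 /d2_2 /d0_1 /d1_1 /s0_0.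
by sgrp_simpl; rewrite ?p1 ?n1 ?m1; sgrp_simpl.
Qed.

Lemma B2T_Phi z : Z2T act z -> B2T act z <-> B2G act (Phi z).
Proof.
move=> [z_coset _]; split.
  by move=> [_ [b zE]]; exists b => g1 g0; rewrite -Phi_dT1 /Phi zE.
move=> [b PhiE]; split => //; exists b => m h g.
by rewrite -Phi_s0 PhiE -Phi_dT1 Phi_s0.
Qed.

End CochainComparison.
Unset Implicit Arguments. Set Strict Implicit.

Theorem proposition3p13 (G : sgrp) (M : zmodType) (act : sG G 0 -> M -> M)
  (Hact : is_pi0_module act) :
  (forall (z1 z2 : N1t G -> sG G 0 -> sG G 0 -> M) g1 g0,
      Phi (fun m h g => z1 m h g + z2 m h g) g1 g0
      = Phi z1 g1 g0 + Phi z2 g1 g0) /\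
  (forall z, Z2T act z -> Z2G act (Phi z)) /\
  (forall z1 z2, Z2T act z1 -> Z2T act z2 ->
      (forall g1 g0, Phi z1 g1 g0 = Phi z2 g1 g0) ->
      forall m h g, z1 m h g = z2 m h g) /\
  (forall c, Z2G act c ->
      exists z, Z2T act z /\ forall g1 g0, Phi z g1 g0 = c g1 g0) /\
  (forall z, Z2T act z -> (B2T act z <-> B2G act (Phi z))) /\
  (forall c, B2G act c ->
      exists z, B2T act z /\ forall g1 g0, Phi z g1 g0 = c g1 g0).
Proof.
split; first by [].
split; first exact: Phi_Z2.
split; first by move=> z1 z2 _ _ PhiE m h g; rewrite -!Phi_s0 PhiE.
split.
  by move=> c c_cocycle; exists (Phi_lift c); split; [exact: Phi_lift_Z2 | exact: Phi_liftK].
split; first exact: B2T_Phi.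
move=> c [b cE]; exists (dT1 act b); split; first exact: dT1_B2T.
by move=> g1 g0; rewrite Phi_dT1 cE.
Qed.
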